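(* Let $m\ge2$, $a,b\in(0,1/m)$, $f=f_{a,b}$, $X=X_{a,b}$, and $\delta>0$. Let $\mu$ be an ergodic $f$-invariant Borel probability measure which is $\delta$-biased and satisfies $\mu(X)=1$. Then $\chi^u(\mu)\le(1+2\delta)H(a)$, where $H(a)=-\log\sqrt{a(1-ma)}$.
   Context: $F_a(x)=\frac{x-(i-1)a}{a}$ on $[(i-1)a,ia)$, $i\in\{1,\ldots,m\}$, $F_a(x)=\frac{x-ma}{1-ma}$ on $[ma,1]$. $\Omega_i^+=[(i-1)a,ia)\times[0,1]$ for $i\le m$; $\Omega_i^+=[ma,1]\times[\frac{i-m-1}{m},\frac{i-m}{m})$ for $m+1\le i\le2m-1$; $\Omega_{2m}^+=[ma,1]\times[\frac{m-1}{m},1]$. $f_a(x,y)=(F_a(x),\frac{y}{m}+\frac{i-1}{m})$ on $\Omega_i^+$ for $i\le m$, $f_a(x,y)=(F_a(x),my-i+m+1)$ on $\Omega_i^+$ for $i\ge m+1$. $\Omega_i=\Omega_i^+\times[0,1]$, $f_{a,b}(x,y,z)=(f_a(x,y),(1-mb)z)$ on $\Omega_i$ for $i\le m$, $f_{a,b}(x,y,z)=(f_a(x,y),bz+1-mb+b(i-m-1))$ on $\Omega_i$ for $i\ge m+1$. $X_{a,b}=\bigcap_{n\in\mathbb Z}f_{a,b}^{-n}(\bigcup_i\mathrm{int}\,\Omega_i)$; for $p\in X$ let $(\omega_n)_{n\in\mathbb Z}$ be the unique sequence with $f^n(p)\in\mathrm{int}\,\Omega_{\omega_n}$. Define $\psi^u\colon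 X\to\mathbb R$ by $\psi^u(p)=-\log a$ if $\omega_0\le m$ and $\psi^u(p)=-\log(1-ma)$ if $\omega_0\ge m+1$; for $\mu$ with $\mu(X)=1$, the unstable Lyapunov exponent is $\chi^u(\mu)=\int_X\psi^u\,d\mu$. For $\delta\ge0$, an $f$-invariant Borel probability measure $\mu$ is $\delta$-biased if $\mu(X)=1$ and $\big|\mu(\bigcup_{i=1}^m\Omega_i)-\mu(\bigcup_{i=m+1}^{2m}\Omega_i)\big|\le\delta$. *)

From HB Require Import structures.
From mathcomp Require Import all_boot all_order all_algebra.
From mathcomp Require Import all_classical all_reals all_analysis.
Set Implicit Arguments. Unset Strict Implicit. Unset Printing Implicit Defensive.
Import Order.TTheory GRing.Theory Num.Theory.
Import numFieldNormedType.Exports.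
Local Open Scope classical_set_scope.
Local Open Scope ring_scope.

Section Skew.
Variables (R : realType) (m : nat) (a b : R).

Definition Omega_plus (i : nat) : set (R * R) :=
  if (1 <= i <= m)%N then
    [set q | (i - 1)%:R * a <= q.1 < i%:R * a /\ 0 <= q.2 <= 1]
  else if (m + 1 <= i <= 2 * m - 1)%N then
    [set q | m%:R * a <= q.1 <= 1 /\
             (i - m - 1)%:R / m%:R <= q.2 < (i - m)%:R / m%:R]
  else if i == (2 * m)%N then
    [set q | m%:R * a <= q.1 <= 1 /\ (m - 1)%:R / m%:R <= q.2 <= 1]
  else set0.

(* Omega_i = Omega_i^+ x [0,1]; points are ((x, y), z) *)
Definition Omega (i : nat) : set (R * R * R) :=
  [set p | Omega_plus i p.1 /\ 0 <= p.2 <= 1].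

Definition f_formula (i : nat) (p : R * R * R) : R * R * R :=
  let x := p.1.1 in let y := p.1.2 in let z := p.2 in
  if (i <= m)%N then
    ((x - (i - 1)%:R * a) / a, y / m%:R + (i - 1)%:R / m%:R,
     (1 - m%:R * b) * z)
  else
    ((x - m%:R * a) / (1 - m%:R * a), m%:R * y - i%:R + m%:R + 1,
     b * z + 1 - m%:R * b + b * (i - m - 1)%:R).

(* the (unique) index i in {1..2m} with p in Omega_i, or 0 if none *)
Definition omega_idx (p : R * R * R) : nat :=
  xget 0%N [set i | (1 <= i <= 2 * m)%N /\ Omega i p].

(* f_{a,b}: defined by the formulas on the Omega_i; identity off [0,1]^3 *)
Definition fab (p : R * R * R) : R * R * R :=
  if (1 <= omega_idx p <= 2 * m)%N then f_formula (omega_idx p) p else p.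

Definition Uint : set (R * R * R) :=
  \bigcup_(i in [set i | (1 <= i <= 2 * m)%N]) interior (Omega i).

(* X_{a,b} = \bigcap_{n in Z} f^{-n}(Uint): for n <= 0 a preimage under f^|n|,
   for n > 0 the image under f^n *)
Definition Xab : set (R * R * R) :=
  [set p | forall n : nat, Uint (iter n fab p) /\ ((iter n fab) @` Uint) p].

Definition psi_u (p : R * R * R) : R :=
  if `[< exists i, (1 <= i <= m)%N /\ interior (Omega i) p >] then - ln a
  else - ln (1 - m%:R * a).

Definition chi_u (mu : probability (R * R * R)%type R) : \bar R :=
  (\int[mu]_(p in Xab) (psi_u p)%:E)%E.

Definition f_invariant (mu : probability (R * R * R)%type R) : Prop :=
  forall A : set (R * R * R), measurable A -> mu (fab @^-1` A) = mu A.

Definition f_ergodic (mu : probability (R * R * R)%type R) : Prop :=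
  forall A : set (R * R * R), measurable A -> fab @^-1` A = A ->
    mu A = 0%E \/ mu A = 1%E.

Definition delta_biased (delta : R) (mu : probability (R * R * R)%type R) : Prop :=
  mu Xab = 1%E /\
  (`| mu (\bigcup_(i in [set i | (1 <= i <= m)%N]) Omega i)
     - mu (\bigcup_(i in [set i | (m + 1 <= i <= 2 * m)%N]) Omega i) |
   <= delta%:E)%E.

End Skew.

Definition Hfun (R : realType) (m : nat) (a : R) : R :=
  - ln (Num.sqrt (a * (1 - m%:R * a))).

From HB Require Import structures.
From mathcomp Require Import all_boot all_order all_algebra.
From mathcomp Require Import all_classical all_reals all_analysis.
From mathcomp Require Import measurable_realfun zify lra.
Import Order.TTheory GRing.Theory Num.Theory.
Local Open Scope classical_set_scope.
Local Open Scope ring_scope.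

Set Implicit Arguments.
Unset Strict Implicit.

(** The potential [psi_u] only records whether a point of [X] lies in a left
  cell [Omega_i], [i <= m] (value [-ln a]), or in a right cell (value
  [-ln (1 - m a)]).  The two unions [L] and [R] of these cells are disjoint,
  so [chi_u mu <= -ln a * mu L - ln (1 - m a) * mu R] with [mu L + mu R <= 1].
  Being [delta]-biased then puts both masses below [(1 + delta) / 2], and
  [H(a)] is exactly the mean of the two exponents, whence
  [chi_u mu <= (1 + delta) H(a) <= (1 + 2 delta) H(a)]. *)

Section GeneralFacts.
Variable R : realType.

Lemma ln_sqrt (x : R) : 0 <= x -> ln (Num.sqrt x) = ln x / 2.
Proof. by move=> x_ge0; rewrite -powR12_sqrt // ln_powR mulrC. Qed.

Lemma biased_weighted_le (A B x y d : R) : 0 <= A -> 0 <= B ->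
  x + y <= 1 -> `|x - y| <= d -> A * x + B * y <= (1 + d) * ((A + B) / 2).
Proof.
move=> A_ge0 B_ge0 xy_le1 /[!ler_norml] /andP[yx_le xy_le].
have Ax : A * x <= A * ((1 + d) / 2) by rewrite ler_wpM2l //; lra.
have By : B * y <= B * ((1 + d) / 2) by rewrite ler_wpM2l //; lra.
lra.
Qed.

Context {d : measure_display} {T : measurableType d}.

(* Unlike [ge0_subset_integral], no measurability is needed: both sides are
   suprema of integrals of simple functions below the integrand. *)
Lemma ge0_le_integral_setT (mu : {measure set T -> \bar R}) (D : set T)
    (f : T -> \bar R) : (forall x, (0 <= f x)%E) ->
  (\int[mu]_(x in D) f x <= \int[mu]_(x in setT) f x)%E.
Proof.
move=> f_ge0; rewrite !ge0_integralE // patch_setT; apply: ereal_sup_le.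
move=> _ [h /= h_le <-]; exists h => //= x; apply: le_trans (h_le x) _.
by rewrite /patch; case: ifP.
Qed.

Lemma integral_indic2 (mu : {measure set T -> \bar R}) (L M : set T) (A B : R) :
  measurable L -> measurable M -> 0 <= A -> 0 <= B ->
  (\int[mu]_(x in setT) (A * \1_L x + B * \1_M x)%:E =
   A%:E * mu L + B%:E * mu M)%E.
Proof.
move=> mL mM A_ge0 B_ge0.
have mscaled_indic (C : R) (S : set T) : measurable S ->
    measurable_fun setT (fun x => (C * \1_S x)%:E : \bar R).
  by move=> mS; apply/measurable_EFinP/measurable_funM => //; exact: measurable_indic.
under eq_integral do rewrite EFinD.
rewrite ge0_integralD //; first last.
- exact: mscaled_indic.
- by move=> x _; rewrite lee_fin mulr_ge0.
- exact: mscaled_indic.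
- by move=> x _; rewrite lee_fin mulr_ge0.
rewrite (integralZl_indic _ (fun=> L)) //; last by rewrite ltNge A_ge0.
rewrite (integralZl_indic _ (fun=> M)) //; last by rewrite ltNge B_ge0.
by rewrite !integral_indic // !setIT.
Qed.

Lemma biased_weighted_mass_le (mu : probability T R) (L M : set T) (A B e : R) :
  measurable L -> measurable M -> L `&` M = set0 -> 0 <= A -> 0 <= B ->
  (`|mu L - mu M| <= e%:E)%E ->
  (A%:E * mu L + B%:E * mu M <= ((1 + e) * ((A + B) / 2))%:E)%E.
Proof.
move=> mL mM LM0 A_ge0 B_ge0.
have muE S : measurable S -> mu S = (fine (mu S))%:E.
  by move=> mS; rewrite fineK // fin_num_measure.
have sum_le1 : fine (mu L) + fine (mu M) <= 1.
  rewrite -lee_fin EFinD -muE // -muE // -measureU //.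
  exact/probability_le1/measurableU.
rewrite (muE L) // (muE M) // -EFinB abse_EFin lee_fin => bias.
by rewrite -!EFinM -EFinD lee_fin biased_weighted_le.
Qed.

End GeneralFacts.

Section Cells.
Variables (R : realType) (m : nat) (a : R).

Definition left_cells : set (R * R * R) :=
  \bigcup_(i in [set i | (1 <= i <= m)%N]) Omega m a i.

Definition right_cells : set (R * R * R) :=
  \bigcup_(i in [set i | (m + 1 <= i <= 2 * m)%N]) Omega m a i.

Lemma measurable_Omega_plus i : measurable (Omega_plus m a i).
Proof.
rewrite /Omega_plus; case: ifP => _.
  exact: measurableX (measurable_itv `[_, _[) (measurable_itv `[_, _]).
case: ifP => _.
  exact: measurableX (measurable_itv `[_, _]) (measurable_itv `[_, _[).
case: ifP => _ //.
exact: measurableX (measurable_itv `[_, _]) (measurable_itv `[_, _]).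
Qed.

Lemma measurable_Omega i : measurable (Omega m a i).
Proof. exact: measurableX (measurable_Omega_plus i) (measurable_itv `[0, 1]). Qed.

Lemma measurable_left_cells : measurable left_cells.
Proof. by apply: bigcup_measurable => i _; exact: measurable_Omega. Qed.

Lemma measurable_right_cells : measurable right_cells.
Proof. by apply: bigcup_measurable => i _; exact: measurable_Omega. Qed.

Lemma Omega_left_lt i p : 0 <= a -> (1 <= i <= m)%N ->
  Omega m a i p -> p.1.1 < m%:R * a.
Proof.
move=> a_ge0 i_left [+ _]; rewrite /Omega_plus i_left => -[/andP[_ x_lt] _].
by apply: (lt_le_trans x_lt); rewrite ler_wpM2r // ler_nat; case/andP: i_left.
Qed.

Lemma Omega_right_ge i p : (m + 1 <= i <= 2 * m)%N ->
  Omega m a i p -> m%:R * a <= p.1.1.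
Proof.
move=> i_right [+ _]; rewrite /Omega_plus ifF; last by lia.
by case: ifP => _; [|case: ifP => _ //]; case=> /andP[].
Qed.

Lemma left_right_cells_disjoint : 0 <= a -> left_cells `&` right_cells = set0.
Proof.
move=> a_ge0; apply/seteqP; split => // p [[i i_left Lp] [j j_right Rp]].
have := lt_le_trans (Omega_left_lt a_ge0 i_left Lp) (Omega_right_ge j_right Rp).
by rewrite ltxx.
Qed.

Lemma not_left_right_cells p : 0 <= a -> left_cells p -> ~ right_cells p.
Proof.
move=> a_ge0 Lp Rp; have : (left_cells `&` right_cells) p by split.
by rewrite left_right_cells_disjoint.
Qed.

Lemma psi_u_cells p : 0 <= a -> Uint m a p ->
  psi_u m a p =
  - ln a * \1_left_cells p + - ln (1 - m%:R * a) * \1_right_cells p.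
Proof.
move=> a_ge0 [i /= i_range p_int].
rewrite /psi_u !indicE; case: asboolP => [[j [j_left /interior_subset p_j]]|not_left].
  have Lp : left_cells p by exists j.
  have nRp := not_left_right_cells a_ge0 Lp.
  by rewrite (mem_set Lp) (memNset nRp) mulr1 mulr0 addr0.
have i_right : (m + 1 <= i <= 2 * m)%N.
  case: (leqP i m) => [i_le|]; last by lia.
  by exfalso; apply: not_left; exists i; split => //; lia.
have Rp : right_cells p by exists i => //; move: p_int => /interior_subset.
have nLp : ~ left_cells p by move=> Lp; exact: not_left_right_cells a_ge0 Lp Rp.
by rewrite (mem_set Rp) (memNset nLp) mulr1 mulr0 add0r.
Qed.

Lemma cell_exponents_ge0 : 0 <= a <= 1 ->
  0 <= - ln a /\ 0 <= - ln (1 - m%:R * a).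
Proof.
move=> /andP[a_ge0 a_le1]; rewrite !oppr_ge0 ln_le0 //.
by rewrite ln_le0 // lerBlDr lerDl mulr_ge0.
Qed.

Lemma chi_u_le_cells b (mu : probability (R * R * R)%type R) : 0 <= a <= 1 ->
  (chi_u m a b mu <= (- ln a)%:E * mu left_cells
                     + (- ln (1 - m%:R * a))%:E * mu right_cells)%E.
Proof.
move=> a01; have [A_ge0 B_ge0] := cell_exponents_ge0 a01.
have /andP[a_ge0 _] := a01.
rewrite -integral_indic2 //; [|exact: measurable_left_cells|exact: measurable_right_cells].
rewrite /chi_u (eq_integral (fun p => (- ln a * \1_left_cells p
                        + - ln (1 - m%:R * a) * \1_right_cells p)%:E)); last first.
  by move=> p /set_mem Xp; rewrite psi_u_cells //; have [] := Xp 0%N.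
by apply: ge0_le_integral_setT => p; rewrite lee_fin addr_ge0 // mulr_ge0.
Qed.

Lemma Hfun_mean : 0 < a -> 0 < 1 - m%:R * a ->
  Hfun m a = (- ln a + - ln (1 - m%:R * a)) / 2.
Proof.
move=> a_gt0 ma_lt1.
by rewrite /Hfun ln_sqrt ?mulr_ge0 ?ltW // lnM ?posrE // -mulNr opprD.
Qed.

End Cells.

Theorem lemma3p6 (R : realType) (m : nat) (a b delta : R)
  (mu : probability (R * R * R)%type R) :
  (2 <= m)%N ->
  0 < a < 1 / m%:R -> 0 < b < 1 / m%:R ->
  0 < delta ->
  f_invariant m a b mu -> f_ergodic m a b mu ->
  delta_biased m a b delta mu ->
  mu (Xab m a b) = 1%E ->
  (chi_u m a b mu <= ((1 + 2 * delta) * Hfun m a)%:E)%E.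
Proof.
move=> m_ge2 /andP[a_gt0 a_lt] _ delta_gt0 _ _ [_ bias] _.
have m_gt0 : 0 < m%:R :> R by rewrite ltr0n; lia.
have ma_lt1 : m%:R * a < 1 by move: a_lt; rewrite ltr_pdivlMr // mulrC.
have a01 : 0 <= a <= 1.
  rewrite ltW //=; apply: le_trans (ltW ma_lt1).
  by apply: ler_peMl (ltW a_gt0) _; rewrite ler1n; lia.
have [A_ge0 B_ge0] := cell_exponents_ge0 m a01.
apply: le_trans (chi_u_le_cells m b mu a01) _.
apply: le_trans (biased_weighted_mass_le (measurable_left_cells m a)
  (measurable_right_cells m a) (left_right_cells_disjoint m (ltW a_gt0))
  A_ge0 B_ge0 bias) _.
rewrite -Hfun_mean ?subr_gt0 // lee_fin ler_wpM2r //.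
  by rewrite Hfun_mean ?subr_gt0 // divr_ge0 ?addr_ge0.
by rewrite lerD2l; apply: ler_peMl (ltW delta_gt0) _; rewrite ler1n.
Qed.
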